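(* Let $k$ be a positive integer and $n_0,\ldots,n_{k-1}$ positive integers, with indices read modulo $k$. For each $j\in\{0,\ldots,k-1\}$ let $A^{(j)}$ be a real $n_j\times n_{j+1}$ matrix. Suppose the signed digraph $G_{A^{(0)}A^{(1)}\cdots A^{(k-1)}}$ contains an e-cycle. Then there exist matrices in $\mathcal{Q}(A^{(0)})\mathcal{Q}(A^{(1)})\cdots\mathcal{Q}(A^{(k-1)})$ which are not $P_0$-matrices.
   Context: Indices $j$ are taken modulo $k$. For a real matrix $M$, $\mathcal{Q}(M)$ is the set of real matrices $X$ of the same dimensions with $M_{ij}>0\Rightarrow X_{ij}>0$, $M_{ij}<0\Rightarrow X_{ij}<0$, $M_{ij}=0\Rightarrow X_{ij}=0$, and $\mathcal{Q}(A^{(0)})\cdots\mathcal{Q}(A^{(k-1)})=\{B^{(0)}\cdots B^{(k-1)} : B^{(j)}\in\mathcal{Q}(A^{(j)})\}$. The signed digraph $G=G_{A^{(0)}\cdots A^{(k-1)}}$ has vertex set the disjoint union of $V_0,\ldots,V_{k-1}$ with $V_j=\{V_j^1,\ldots,V_j^{n_j}\}$; there is a directed edge from $V_j^r$ to $V_{j+1}^s$ iff $(A^{(j)})_{rs}\neq 0$, with the sign of $(A^{(j)})_{rs}$; no other edges (loops allowed when $k=1$). A cycle means a directed cycle; every cycle has length a multiple of $k$. A cycle with $kr_1$ edges, $r_2$ of them negative, is an e-cycle if $(-1)^{r_1+r_2}=1$ and an o-cycle otherwise. A $P_0$-matrix is a real square matrix all of whose principal minors are nonnegative. *)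

From HB Require Import structures.
From mathcomp Require Import all_boot all_order all_algebra.
From mathcomp Require Import reals.
Set Implicit Arguments. Unset Strict Implicit. Unset Printing Implicit Defensive.
Import Order.TTheory GRing.Theory Num.Theory.
Local Open Scope ring_scope.

Section Defs.
Variable R : realType.

Definition qual_class (p q : nat) (M X : 'M[R]_(p, q)) : Prop :=
  forall i j, Num.sg (X i j) = Num.sg (M i j).

(* entry of a matrix at natural indices (0 outside the range) *)
Definition ent (p q : nat) (M : 'M[R]_(p, q)) (r s : nat) : R :=
  match @insub nat (fun x => x < p)%N _ r, @insub nat (fun x => x < q)%N _ s with
  | Some i, Some j => M i j
  | _, _ => 0
  end.

(* Block indices j = 0..k-1 are naturals; dimensions n : nat -> nat with
   n k = n 0 (indices mod k); A j : n_j x n_(j+1). *)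
Variables (k : nat) (n : nat -> nat).

Fixpoint chain (B : forall j : nat, 'M[R]_(n j, n j.+1)) (m : nat)
  : 'M[R]_(n 0, n m) :=
  match m with
  | 0 => 1%:M
  | m'.+1 => chain B m' *m B m'
  end.

Variable A : forall j : nat, 'M[R]_(n j, n j.+1).

(* vertices of G are pairs (j, r) meaning V_j^r (0-based r);
   edge from (j,r) to ((j+1) mod k, s) iff A^(j)_{rs} <> 0 *)
Definition edge_val (u v : nat * nat) : R := ent (A u.1) u.2 v.2.

Definition sdedge : rel (nat * nat) := fun u v =>
  [&& (u.1 < k)%N, v.1 == (u.1.+1 %% k)%N & edge_val u v != 0].

Definition is_dcycle (c : seq (nat * nat)) : bool :=
  [&& c != [::], uniq c & cycle sdedge c].

Definition cycle_edges (c : seq (nat * nat)) := zip c (rot 1 c).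

Definition num_neg (c : seq (nat * nat)) : nat :=
  count (fun e => edge_val e.1 e.2 < 0) (cycle_edges c).

(* length = k * r1, r2 negative edges, e-cycle iff (-1)^(r1+r2) = 1 *)
Definition is_ecycle (c : seq (nat * nat)) : bool :=
  is_dcycle c && ~~ odd ((size c %/ k) + num_neg c)%N.

End Defs.

Definition principal_minor (R : realType) (p : nat) (M : 'M[R]_p)
  (s : {set 'I_p}) : R :=
  \det (mxsub (@enum_val _ (mem s)) (@enum_val _ (mem s)) M).

Definition P0_matrix (R : realType) (p : nat) (M : 'M[R]_p) : Prop :=
  forall s : {set 'I_p}, 0 <= principal_minor M s.

From HB Require Import structures.
From mathcomp Require Import all_boot all_order all_algebra all_fingroup.
From mathcomp Require Import reals polyrcf.
Import Order.TTheory GRing.Theory Num.Theory.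
Local Open Scope ring_scope.
Set Implicit Arguments. Unset Strict Implicit.

(* Keep the sign of A^(j) on the edges of the e-cycle and scale every other
   entry by a parameter e.  At e = 0 the product of the blocks, restricted to
   the r vertices where the cycle (of length r k) meets V_0, is a signed
   permutation matrix of a single r-cycle carrying the signs of the cycle
   edges; its determinant is (-1)^(r-1) (-1)^(#negative edges) = -1 since the
   cycle is an e-cycle.  This principal minor is a polynomial in e, so it is
   still negative for some e > 0, where the perturbed blocks lie in the
   qualitative classes. *)

Section NatIndexedEntries.
Variable R : realType.

Lemma ent_neq0_lt p q (M : 'M[R]_(p, q)) r s :
  ent M r s != 0 -> (r < p)%N && (s < q)%N.
Proof.
rewrite /ent; case: (insubP 'I_p r) => [i ri _|]; case: (insubP 'I_q s) => [j sj _|] //=;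
  by rewrite ?ri ?sj ?eqxx.
Qed.

Lemma ent_ord p q (M : 'M[R]_(p, q)) (i : 'I_p) (j : 'I_q) : ent M i j = M i j.
Proof.
rewrite /ent; case: (insubP 'I_p i) => [i' _ /val_inj ->|]; last by rewrite ltn_ord.
by case: (insubP 'I_q j) => [j' _ /val_inj ->|]; last by rewrite ltn_ord.
Qed.

Lemma ent_out p q (M : 'M[R]_(p, q)) r s :
  ~~ ((r < p)%N && (s < q)%N) -> ent M r s = 0.
Proof. by apply: contraNeq => /ent_neq0_lt. Qed.

Lemma ent_mulmx p q t (X : 'M[R]_(p, q)) (Y : 'M[R]_(q, t)) r s :
  ent (X *m Y) r s = \sum_(x < q) ent X r x * ent Y x s.
Proof.
case: (boolP ((r < p)%N && (s < t)%N)) => [/andP[rp st]|out].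
  rewrite -[r]/(val (Ordinal rp)) -[s]/(val (Ordinal st)) ent_ord mxE.
  by apply: eq_bigr => x _; rewrite !ent_ord.
rewrite ent_out // big1 // => x _.
case/nandP: out => out; first by rewrite (ent_out X) ?mul0r // (negPf out).
by rewrite (ent_out Y) ?mulr0 // (negPf out) andbF.
Qed.

End NatIndexedEntries.

Fixpoint mxchain (T : pzRingType) (n : nat -> nat)
  (B : forall j : nat, 'M[T]_(n j, n j.+1)) (m : nat) : 'M[T]_(n 0%N, n m) :=
  if m is m'.+1 then mxchain B m' *m B m' else 1%:M.

Lemma chain_mxchain (R : realType) n (B : forall j : nat, 'M[R]_(n j, n j.+1)) m :
  chain B m = mxchain B m.
Proof. by elim: m => //= m ->. Qed.

Lemma eq_mxchain (T : pzRingType) n (B1 B2 : forall j : nat, 'M[T]_(n j, n j.+1)) m :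
  (forall j, B1 j = B2 j) -> mxchain B1 m = mxchain B2 m.
Proof. by move=> eqB; elim: m => //= m ->; rewrite eqB. Qed.

Lemma map_mxchain (T1 T2 : nzRingType) (f : {rmorphism T1 -> T2}) n
  (B : forall j : nat, 'M[T1]_(n j, n j.+1)) m :
  map_mx f (mxchain B m) = mxchain (fun j => map_mx f (B j)) m.
Proof. by elim: m => [|m IH] /=; [exact: map_mx1 | rewrite map_mxM IH]. Qed.

Lemma cycle_nth_mod (T : Type) (x0 : T) (e : rel T) (c : seq T) :
  (0 < size c)%N -> path.cycle e c ->
  forall i, e (nth x0 c (i %% size c)) (nth x0 c (i.+1 %% size c)).
Proof.
move=> c_gt0; rewrite (cycle_path x0) => /(pathP x0) ec i.
set j := (i %% size c)%N; have j_lt : (j < size c)%N by rewrite ltn_mod.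
rewrite -addn1 -modnDml addn1 -/j.
case: (ltnP j.+1 (size c)) => [jS_lt|]; first by rewrite modn_small //; exact: (ec j.+1).
move=> le_c_jS; have jS_eq : j.+1 = size c by apply/eqP; rewrite eqn_leq j_lt.
rewrite jS_eq modnn; have := ec 0%N c_gt0; rewrite [nth _ (_ :: _) _]/= -nth_last.
by rewrite -jS_eq.
Qed.

Lemma prod_sgr_count (R : realDomainType) (T : Type) (g : T -> R) (s : seq T) :
  all (fun x => g x != 0) s ->
  \prod_(x <- s) Num.sg (g x) = (-1) ^+ count (fun x => g x < 0) s.
Proof.
elim: s => [|x s IH] /=; first by rewrite big_nil.
case/andP => gx_neq0 /IH {}IH; rewrite big_cons IH exprD; congr (_ * _).
by case: (ltrgtP (g x) 0) gx_neq0 => [/ltr0_sg|/gtr0_sg|] // ->.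
Qed.

Lemma prod_shift_periodic (R : comPzSemiRingType) L (f : nat -> R) b :
  (0 < L)%N -> (forall m, f (m %% L)%N = f m) ->
  \prod_(j < L) f (b + j)%N = \prod_(j < L) f j.
Proof.
move=> L_gt0 fL; pose h (j : 'I_L) : 'I_L := Ordinal (ltn_pmod (b + j) L_gt0).
have h_inj : injective h.
  move=> x y /(congr1 val) /= /eqP; rewrite eqn_modDl !modn_small ?ltn_ord //.
  by move/eqP/val_inj.
by rewrite [RHS](reindex_inj h_inj); apply: eq_bigr => j _; rewrite fL.
Qed.

Lemma prod_blocks (R : comPzSemiRingType) (f : nat -> R) r k :
  \prod_(t < r) \prod_(i < k) f (t * k + i)%N = \prod_(j < r * k) f j.
Proof.
rewrite -(big_mkord xpredT f); elim: r => [|r IH]; first by rewrite big_ord0 mul0n big_geq.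
rewrite big_ord_recr /= IH mulSnr [in RHS](big_cat_nat (n := (r * k)%N)) ?leq_addr //=.
congr (_ * _); rewrite -{2}[(r * k)%N]add0n big_addn addKn big_mkord.
by apply: eq_bigr => i _; rewrite addnC.
Qed.

Lemma odd_perm_transitive (T : finType) (s : {perm T}) x :
  (forall y, y \in porbit s x) -> odd_perm s = ~~ odd #|T|.
Proof.
move=> s_trans; rewrite /odd_perm.
suff -> : porbits s = [set porbit s x] by rewrite cards1 addbT.
apply/setP => P; rewrite inE; apply/imsetP/eqP => [[y _ ->]|->]; last by exists x.
by apply/eqP; rewrite eq_porbit_mem.
Qed.

Lemma poly_neg_right (R : rcfType) (p : {poly R}) :
  p.[0] < 0 -> exists2 e, 0 < e & p.[e] < 0.
Proof.
move=> p0_lt0; have [d d_gt0 pd] : exists2 d, 0 < d &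
    forall y, `|y - 0| < d -> `|p.[y] - p.[0]| < - p.[0].
  by apply: poly_cont; rewrite oppr_gt0.
have e_gt0 : 0 < d / 2 by rewrite divr_gt0.
exists (d / 2) => //; have := pd (d / 2); rewrite subr0 gtr0_norm // ltr_pdivrMr //.
rewrite ltr_pMr // ltr1n => /(_ isT); rewrite ltr_distl => /andP[_].
by rewrite subrr.
Qed.

Section CycleWalk.
Variables (R : realType) (k : nat) (n : nat -> nat).
Variables (A : forall j : nat, 'M[R]_(n j, n j.+1)) (c : seq (nat * nat)).
Hypothesis c_ecycle : is_ecycle k A c.

Local Notation L := (size c).
Local Notation x0 := (0%N, 0%N).

Lemma size_ecycle_gt0 : (0 < L)%N.
Proof. by move: c_ecycle => /andP[/and3P[] + _ _ _]; case: c. Qed.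

Definition cnth i := nth x0 c (i %% L).

Lemma cnth_mod i : cnth (i %% L) = cnth i.
Proof. by rewrite /cnth modn_mod. Qed.

Lemma cnthS_mod i j : i = j %[mod L] -> cnth i.+1 = cnth j.+1.
Proof.
move=> eq_ij; rewrite -cnth_mod -[in RHS]cnth_mod -addn1 -[j.+1]addn1.
by rewrite -modnDml eq_ij modnDml.
Qed.

Lemma cnth_edge i : sdedge k A (cnth i) (cnth i.+1).
Proof.
move: c_ecycle => /andP[/and3P[_ _ c_cycle] _].
exact: cycle_nth_mod size_ecycle_gt0 c_cycle i.
Qed.

Lemma cnth_layer i : (cnth i).1 = (((cnth 0).1 + i) %% k)%N.
Proof.
elim: i => [|i IH]; first by rewrite addn0 modn_small //; case/and3P: (cnth_edge 0).
case/and3P: (cnth_edge i) => _ /eqP -> _.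
by rewrite IH -addn1 modnDml addn1 addnS.
Qed.

Lemma cnth_inj i j : cnth i = cnth j -> i = j %[mod L].
Proof.
move: c_ecycle => /andP[/and3P[_ c_uniq _] _] eq_ij; apply/eqP.
by rewrite -(nth_uniq x0 _ _ c_uniq) ?ltn_mod ?size_ecycle_gt0 //; apply/eqP.
Qed.

Lemma size_cycle_edges : size (cycle_edges c) = L.
Proof. by rewrite /cycle_edges size_zip size_rot minnn. Qed.

Lemma nth_cycle_edges j :
  (j < L)%N -> nth (x0, x0) (cycle_edges c) j = (cnth j, cnth j.+1).
Proof.
move=> j_lt; rewrite /cycle_edges nth_zip ?size_rot // /cnth modn_small //.
congr (_, _); case: c j_lt => [|x s] //= j_lt.
rewrite rot1_cons nth_rcons; case: ltnP => [j_lt_s|le_s_j]; first by rewrite modn_small.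
have -> : j = size s by apply/eqP; rewrite eqn_leq le_s_j andbT.
by rewrite eqxx modnn.
Qed.

Definition walk i := cnth (k - (cnth 0).1 + i).

Lemma walk_layer i : (walk i).1 = (i %% k)%N.
Proof.
have lt_c0_k : ((cnth 0).1 < k)%N by case/and3P: (cnth_edge 0).
by rewrite /walk cnth_layer addnA subnKC ?modnDl // ltnW.
Qed.

Lemma walk_edge i : sdedge k A (walk i) (walk i.+1).
Proof. by rewrite /walk addnS; apply: cnth_edge. Qed.

Lemma walk_mod i : walk (i %% L) = walk i.
Proof. by rewrite /walk -cnth_mod modnDmr cnth_mod. Qed.

Lemma walk_inj i j : walk i = walk j -> i = j %[mod L].
Proof. by move/cnth_inj/eqP; rewrite eqn_modDl => /eqP. Qed.

Lemma mem_cycle_edges_walk i y :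
  ((walk i, y) \in cycle_edges c) = (y == walk i.+1).
Proof.
rewrite /walk addnS; apply/idP/eqP => [|->].
  case/(nthP (x0, x0)) => j; rewrite size_cycle_edges => j_lt.
  by rewrite nth_cycle_edges // => -[/cnth_inj/cnthS_mod -> <-].
set j := (k - (cnth 0).1 + i)%N; rewrite -cnth_mod (cnthS_mod (j := j %% L)) ?modn_mod //.
rewrite -nth_cycle_edges ?ltn_mod ?size_ecycle_gt0 //.
by rewrite mem_nth // size_cycle_edges ltn_mod size_ecycle_gt0.
Qed.

Lemma prod_sg_walk :
  \prod_(i < L) Num.sg (edge_val A (walk i) (walk i.+1)) = (-1) ^+ num_neg A c.
Proof.
pose f m := Num.sg (edge_val A (cnth m) (cnth m.+1)).
have f_mod m : f (m %% L)%N = f m by rewrite /f cnth_mod (cnthS_mod (j := m)) ?modn_mod.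
transitivity (\prod_(i < L) f (k - (cnth 0).1 + i)%N).
  by apply: eq_bigr => i _; rewrite /f /walk addnS.
rewrite prod_shift_periodic ?size_ecycle_gt0 // /num_neg -prod_sgr_count; last first.
  apply/allP => e /(nthP (x0, x0)) [j]; rewrite size_cycle_edges => j_lt <-.
  by rewrite nth_cycle_edges //; case/and3P: (cnth_edge j).
rewrite (big_nth (x0, x0)) big_mkord size_cycle_edges.
by apply: eq_bigr => j _; rewrite nth_cycle_edges.
Qed.

Lemma dvdn_size_ecycle : (k %| L)%N.
Proof. by rewrite /dvdn -walk_layer -walk_mod modnn walk_layer mod0n. Qed.

End CycleWalk.

Section Perturbation.
Variables (R : realType) (k : nat) (n : nat -> nat).
Variables (A : forall j : nat, 'M[R]_(n j, n j.+1)) (c : seq (nat * nat)).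

Definition on_cycle j r s := ((j, r), ((j.+1 %% k)%N, s)) \in cycle_edges c.

Definition perturb (e : R) j : 'M[R]_(n j, n j.+1) :=
  \matrix_(r, s) ((if on_cycle j r s then 1 else e) * Num.sg (A j r s)).

Lemma perturb_qual e j : 0 < e -> qual_class (A j) (perturb e j).
Proof.
move=> e_gt0 r s; rewrite mxE sgrM sgr_id.
by case: ifP => _; rewrite ?sgr1 ?(gtr0_sg e_gt0) mul1r.
Qed.

Hypotheses (k_gt0 : (0 < k)%N) (c_ecycle : is_ecycle k A c).

Local Notation walk := (walk k c).
Local Notation walk_sg i := (Num.sg (edge_val A (walk i) (walk i.+1))).

Lemma walk_edge_lt i :
  ((walk i).2 < n (walk i).1)%N && ((walk i.+1).2 < n (walk i).1.+1)%N.
Proof. by case/and3P: (walk_edge c_ecycle i) => _ _ /ent_neq0_lt. Qed.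

Lemma ent_perturb0_walk i s :
  ent (perturb 0 (walk i).1) (walk i).2 s =
  if s == (walk i.+1).2 then walk_sg i else 0.
Proof.
case/andP: (walk_edge_lt i) => src_lt tgt_lt.
have walk_layerS : (walk i.+1).1 = ((walk i).1.+1 %% k)%N.
  by case/and3P: (walk_edge c_ecycle i) => _ /eqP.
case: (ltnP s (n (walk i).1.+1)) => [s_lt|s_ge]; last first.
  rewrite ent_out ?src_lt -?leqNgt //.
  by case: eqP s_ge => // ->; rewrite leqNgt tgt_lt.
rewrite -[(walk i).2]/(val (Ordinal src_lt)) -[s]/(val (Ordinal s_lt)) ent_ord mxE /=.
rewrite /on_cycle -walk_layerS -surjective_pairing (mem_cycle_edges_walk c_ecycle).
have -> : (((walk i.+1).1, s) == walk i.+1) = (s == (walk i.+1).2).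
  by rewrite [in LHS](surjective_pairing (walk i.+1)) xpair_eqE eqxx.
case: eqP => [s_eq|_]; last by rewrite mul0r.
rewrite mul1r /edge_val -s_eq -[(walk i).2]/(val (Ordinal src_lt)).
by rewrite -[s]/(val (Ordinal s_lt)) ent_ord.
Qed.

Definition block_sign t m := \prod_(i < m) walk_sg (t * k + i)%N.

Definition root_idx t := (walk (t * k)).2.

Lemma walk_block_layer t m : (m < k)%N -> (walk (t * k + m)).1 = m.
Proof. by move=> m_lt; rewrite (walk_layer c_ecycle) modnMDl modn_small. Qed.

Lemma root_idx_lt t : (root_idx t < n 0)%N.
Proof.
have layer0 : (walk (t * k)).1 = 0%N by rewrite -[(t * k)%N]addn0 walk_block_layer.
by case/andP: (walk_edge_lt (t * k)); rewrite layer0.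
Qed.

Lemma ent_chain_perturb0 t m s : (m <= k)%N ->
  ent (chain (perturb 0) m) (root_idx t) s =
  if s == (walk (t * k + m)).2 then block_sign t m else 0.
Proof.
elim: m s => [|m IH] s m_le.
  rewrite /= addn0 /block_sign big_ord0.
  case: (ltnP s (n 0)) => [s_lt|s_ge]; last first.
    rewrite ent_out; last by rewrite [(s < _)%N]ltnNge s_ge andbF.
    by case: eqP s_ge => // ->; rewrite leqNgt root_idx_lt.
  rewrite -[root_idx t]/(val (Ordinal (root_idx_lt t))) -[s]/(val (Ordinal s_lt)).
  by rewrite ent_ord mxE -(inj_eq val_inj) /= eq_sym; case: eqP.
have layer_m : (walk (t * k + m)).1 = m by apply: walk_block_layer.
have src_lt : ((walk (t * k + m)).2 < n m)%N.
  by case/andP: (walk_edge_lt (t * k + m)); rewrite layer_m.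
rewrite [chain _ m.+1]/= ent_mulmx (bigD1 (Ordinal src_lt)) //= IH ?(ltnW m_le) // eqxx.
rewrite big1 ?addr0 => [|x x_neq]; last first.
  rewrite IH ?(ltnW m_le) //; case: eqP => [x_eq|_]; last by rewrite mul0r.
  by move: x_neq; rewrite (_ : x = Ordinal src_lt) ?eqxx //; apply: val_inj.
have := ent_perturb0_walk (t * k + m) s; rewrite layer_m => ->.
by rewrite addnS /block_sign big_ord_recr /=; case: eqP; rewrite ?mulr0.
Qed.

End Perturbation.

Section LayerZeroMinor.
Variables (R : realType) (k : nat) (n : nat -> nat).
Variables (A : forall j : nat, 'M[R]_(n j, n j.+1)) (c : seq (nat * nat)).
Hypotheses (k_gt0 : (0 < k)%N) (c_ecycle : is_ecycle k A c) (hnk : n k = n 0%N).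

Local Notation L := (size c).
Local Notation walk := (walk k c).
Local Notation root_idx := (root_idx k c).

Definition turns := (L %/ k)%N.

Lemma size_ecycle_turns : L = (turns * k)%N.
Proof. by rewrite divnK // (dvdn_size_ecycle c_ecycle). Qed.

Lemma turns_gt0 : (0 < turns)%N.
Proof.
by have := size_ecycle_gt0 c_ecycle; rewrite size_ecycle_turns muln_gt0 => /andP[].
Qed.

Definition root t : 'I_(n 0) := Ordinal (root_idx_lt k_gt0 c_ecycle t).

Lemma walk_root t : walk (t * k) = (0%N, root_idx t).
Proof.
have := walk_block_layer c_ecycle t k_gt0; rewrite addn0 => layer0.
by rewrite [LHS]surjective_pairing layer0.
Qed.

Lemma root_eq t t' : (root t == root t') = (t == t' %[mod turns]).
Proof.
rewrite -(inj_eq val_inj) /=; apply/eqP/eqP => [eq_idx|eq_mod].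
  have /(walk_inj c_ecycle) : walk (t * k) = walk (t' * k) by rewrite !walk_root eq_idx.
  by rewrite size_ecycle_turns -!muln_modl => /eqP; rewrite eqn_pmul2r // => /eqP.
rewrite /root_idx -walk_mod -[walk (t' * k)]walk_mod size_ecycle_turns.
by rewrite -!muln_modl eq_mod.
Qed.

Lemma root_mod t : root (t %% turns) = root t.
Proof. by apply/eqP; rewrite root_eq modn_mod. Qed.

Lemma root_succ t t' : root t = root t' -> root t.+1 = root t'.+1.
Proof.
move/eqP; rewrite root_eq => /eqP eq_mod; apply/eqP.
by rewrite root_eq -addn1 -[t'.+1]addn1 -modnDml eq_mod modnDml.
Qed.

Definition roots : {set 'I_(n 0)} := [set root t | t : 'I_turns].

Lemma root_in t : root t \in roots.
Proof. by rewrite -root_mod; apply: imset_f (Ordinal (ltn_pmod t turns_gt0)) _. Qed.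

Lemma root_inj_turns t t' : (t < turns)%N -> (t' < turns)%N -> root t = root t' -> t = t'.
Proof. by move=> t_lt t'_lt /eqP; rewrite root_eq !modn_small // => /eqP. Qed.

Lemma card_roots : #|roots| = turns.
Proof.
rewrite card_imset ?card_ord // => t t' /root_inj_turns eq_tt'.
by apply: val_inj; apply: eq_tt'.
Qed.

Definition root_step (x : 'I_(n 0)) : nat :=
  if [pick t : 'I_turns | x == root t] is Some t then val t else 0%N.

Lemma root_stepK x : x \in roots -> root (root_step x) = x.
Proof.
case/imsetP => t _ ->; rewrite /root_step; case: pickP => [t' /eqP //|no_t].
by have := no_t t; rewrite eqxx.
Qed.

Lemma root_step_lt x : (root_step x < turns)%N.
Proof.
by rewrite /root_step; case: pickP => [t _|_]; [apply: ltn_ord | apply: turns_gt0].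
Qed.

Lemma root_step_root t : (t < turns)%N -> root_step (root t) = t.
Proof.
by move=> t_lt; apply: root_inj_turns; rewrite ?root_step_lt ?root_stepK ?root_in.
Qed.

Local Notation rank := (enum_rank_in (root_in 0)).
Local Notation E := (@enum_val _ (mem roots)).

Definition next_rank (y : 'I_#|roots|) := rank (root (root_step (E y)).+1).

Lemma next_rank_inj : injective next_rank.
Proof.
move=> y z /(congr1 enum_val); rewrite /next_rank !enum_rankK_in ?root_in //.
move=> /eqP; rewrite root_eq -addn1 -[(root_step _).+1]addn1 eqn_modDr.
rewrite !modn_small ?root_step_lt // => /eqP eq_step.
by apply: enum_val_inj; rewrite -(root_stepK (enum_valP y)) eq_step root_stepK ?enum_valP.
Qed.

Definition root_cycle : {perm 'I_#|roots|} := perm next_rank_inj.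

Lemma root_cycle_rank t : root_cycle (rank (root t)) = rank (root t.+1).
Proof.
rewrite permE /next_rank enum_rankK_in ?root_in //.
by rewrite (@root_succ _ t) ?root_stepK ?root_in.
Qed.

Lemma root_cycle_transitive y : y \in porbit root_cycle (rank (root 0)).
Proof.
have iter_rank m : iter m root_cycle (rank (root 0)) = rank (root m).
  by elim: m => //= m ->; rewrite root_cycle_rank.
apply/porbitP; have [t _ Et] := imsetP (enum_valP y).
by exists (val t); rewrite permX iter_rank -Et enum_valK_in.
Qed.

Definition chain0 : 'M[R]_(n 0) := castmx (erefl (n 0%N), hnk) (chain (perturb k A c 0) k).

Lemma chain0_root t y :
  chain0 (root t) y = if val y == root_idx t.+1 then block_sign k A c t k else 0.
Proof.
rewrite /chain0 castmxE -ent_ord /=.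
by rewrite (ent_chain_perturb0 k_gt0 c_ecycle) // /root_idx mulSnr.
Qed.

Lemma mxsub_chain0_roots :
  mxsub E E chain0 =
  diag_mx (\row_y block_sign k A c (root_step (E y)) k) *m perm_mx root_cycle.
Proof.
apply/matrixP => y z; rewrite mul_diag_mx !mxE permE /next_rank.
rewrite -{1}(root_stepK (enum_valP y)) chain0_root -(inj_eq enum_val_inj).
rewrite enum_rankK_in ?root_in // -(inj_eq val_inj) /= eq_sym.
by case: eqP; rewrite ?mulr1 ?mulr0.
Qed.

Lemma prod_block_sign_roots :
  \prod_(y < #|roots|) block_sign k A c (root_step (E y)) k = (-1) ^+ num_neg A c.
Proof.
rewrite -(big_enum_val (fun x => block_sign k A c (root_step x) k)).
rewrite big_imset /= => [|t t' _ _ /root_inj_turns eq_tt']; last first.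
  by apply: val_inj; apply: eq_tt'.
rewrite (eq_bigr (fun t : 'I_turns => block_sign k A c t k)) => [|t _]; last first.
  by rewrite root_step_root.
rewrite /block_sign (prod_blocks (fun j => Num.sg (edge_val A (walk j) (walk j.+1)))).
by rewrite -size_ecycle_turns (prod_sg_walk c_ecycle).
Qed.

Lemma principal_minor_chain0_roots : principal_minor chain0 roots = -1.
Proof.
rewrite /principal_minor mxsub_chain0_roots det_mulmx det_diag det_perm.
rewrite (eq_bigr _ (fun y _ => mxE _ _ _ _)) prod_block_sign_roots.
rewrite (odd_perm_transitive root_cycle_transitive) card_ord card_roots.
move: c_ecycle => /andP[_]; rewrite -/turns oddD -signr_odd.
by case: (odd turns); case: (odd (num_neg A c)); rewrite ?expr0 ?expr1 ?mulN1r ?mul1r.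
Qed.

End LayerZeroMinor.

Section MinorPolynomial.
Variables (R : realType) (k : nat) (n : nat -> nat).
Variables (A : forall j : nat, 'M[R]_(n j, n j.+1)) (c : seq (nat * nat)).
Hypothesis hnk : n k = n 0%N.

Definition perturb_poly j : 'M[{poly R}]_(n j, n j.+1) :=
  \matrix_(r, s) ((if on_cycle k c j r s then 1 else 'X) * (Num.sg (A j r s))%:P).

Lemma map_perturb_poly e j : map_mx (horner_eval e) (perturb_poly j) = perturb k A c e j.
Proof.
apply/matrixP => r s; rewrite !mxE horner_evalE hornerM hornerC.
by case: ifP; rewrite ?hornerX ?hornerC.
Qed.

Definition minor_poly (S : {set 'I_(n 0)}) : {poly R} :=
  \det (mxsub (@enum_val _ (mem S)) (@enum_val _ (mem S))
    (castmx (erefl (n 0%N), hnk) (mxchain perturb_poly k))).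

Lemma horner_minor_poly S e :
  (minor_poly S).[e] =
  principal_minor (castmx (erefl (n 0%N), hnk) (chain (perturb k A c e) k)) S.
Proof.
rewrite /minor_poly -horner_evalE -det_map_mx /principal_minor; congr (\det _).
apply/matrixP => i j; rewrite !mxE !castmxE /= chain_mxchain.
by rewrite -(eq_mxchain _ (map_perturb_poly e)) -map_mxchain mxE.
Qed.

End MinorPolynomial.

Theorem corollary6 (R : realType) (k : nat) (n : nat -> nat)
  (hk : (0 < k)%N) (hn : forall j, (j < k)%N -> (0 < n j)%N)
  (hnk : n k = n 0%N)
  (A : forall j : nat, 'M[R]_(n j, n j.+1)) :
  (exists c : seq (nat * nat), is_ecycle k A c) ->
  exists B : forall j : nat, 'M[R]_(n j, n j.+1),
    (forall j, (j < k)%N -> qual_class (A j) (B j)) /\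
    ~ P0_matrix (castmx (erefl (n 0%N), hnk) (chain B k)).
Proof.
move=> [c c_ecycle].
have [e e_gt0 minor_lt0] :
    exists2 e, 0 < e & (minor_poly A c hnk (roots hk c_ecycle)).[e] < 0.
  apply: poly_neg_right; rewrite horner_minor_poly.
  by rewrite (principal_minor_chain0_roots hk c_ecycle hnk) ltrN10.
exists (perturb k A c e); split => [j _|P0]; first exact: perturb_qual.
by have := P0 (roots hk c_ecycle); rewrite -horner_minor_poly leNgt minor_lt0.
Qed.
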